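(* Let $(a_k)_{k\geqslant1}$ be a sequence of complex numbers such that \[ A(n)=\sum_{k\leqslant n}a_k\left[\frac{n}{k}\right]=Cn+o(n)\quad\text{as } n\to\infty \] for some constant $C\in\mathbb{C}$. Then \[ S(n)=\sum_{k\leqslant n}a_k\left[\frac{n}{k}\right]\log k=o(n\log n)\quad\text{as } n\to\infty. \]
   Context: $[x]$ denotes the integer part of a real number $x$. *)

From Stdlib Require Import Reals Lra Lia Arith.
From Coquelicot Require Import Coquelicot.
Open Scope R_scope.

Definition Asum (a : nat -> C) (n : nat) : C :=
  sum_n_m (fun k => Cmult (a k) (RtoC (INR (Nat.div n k)))) 1 n.

Definition Ssum (a : nat -> C) (n : nat) : C :=
  sum_n_m (fun k => Cmult (a k) (RtoC (INR (Nat.div n k) * ln (INR k)))) 1 n.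

From Stdlib Require Import Reals Lra Lia.
From Coquelicot Require Import Coquelicot.
From HB Require Import structures.
From mathcomp Require Import all_boot zify.
Open Scope R_scope.

(* Replacing a_1 by a_1 - C changes A(m) by C m and leaves S(n) unchanged (log 1 = 0),
   so we may assume A(m) = o(m).  Writing [n/k] = #{j : jk <= n} and
   log k = log n - (log n - log (jk)) - log j, and using Legendre's formula
   log m! = sum_{p^t <= m} log p [m/p^t] for the last part, one gets
     S(n) = A(n) log n - sum_{i < n} (log (i+1) - log i) A(i)
            - sum_{p^t <= n} log p A([n/p^t]).
   If |A(m)| <= e m + K, the three terms are bounded by e n log n + O(K (n + log n)),
   thanks to log n! <= n log n and Chebyshev's bound psi(n) <= 4n; the latter
   follows from (2m)! <= 4^m m!^2. *)

HB.instance Definition _ := Monoid.isComLaw.Build R 0 Rplus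
  (fun x y z => esym (Rplus_assoc x y z)) Rplus_comm Rplus_0_l.

Section RealSums.
Context {I : Type} (r : seq I) (P : pred I).

Lemma sumR_mull c (F : I -> R) :
  c * \big[Rplus/0]_(i <- r | P i) F i = \big[Rplus/0]_(i <- r | P i) (c * F i).
Proof. by elim/big_rec2: _ => [|i y1 y2 _ <-]; lra. Qed.

Lemma sumR_sub (F G : I -> R) :
  \big[Rplus/0]_(i <- r | P i) (F i - G i) =
  \big[Rplus/0]_(i <- r | P i) F i - \big[Rplus/0]_(i <- r | P i) G i.
Proof. by elim/big_rec3: _ => [|i y1 y2 y3 _ ->]; lra. Qed.

Lemma ler_sumR (F G : I -> R) : (forall i, P i -> F i <= G i) ->
  \big[Rplus/0]_(i <- r | P i) F i <= \big[Rplus/0]_(i <- r | P i) G i.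
Proof. by move=> FG; elim/big_ind2: _ => // [|x1 x2 y1 y2]; lra. Qed.

Lemma sumR_ge0 (F : I -> R) : (forall i, P i -> 0 <= F i) ->
  0 <= \big[Rplus/0]_(i <- r | P i) F i.
Proof. by move=> F0; elim/big_ind: _ => // [|x y]; lra. Qed.

Lemma sumR_abs_le (F : I -> R) :
  Rabs (\big[Rplus/0]_(i <- r | P i) F i) <= \big[Rplus/0]_(i <- r | P i) Rabs (F i).
Proof.
elim/big_rec2: _ => [|i y1 y2 _ IH]; first by rewrite Rabs_R0; lra.
by apply: Rle_trans (Rabs_triang _ _) _; lra.
Qed.

End RealSums.

Lemma sumR_ge_term (F : nat -> R) i m n : (forall k, 0 <= F k) -> (m <= i < n)%N ->
  F i <= \big[Rplus/0]_(m <= k < n) F k.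
Proof.
move=> F0 hi; rewrite (bigD1_seq i) ?mem_index_iota ?iota_uniq //=.
by have := sumR_ge0 (index_iota m n) (fun k => k != i) F (fun k _ => F0 k); lra.
Qed.

Lemma sumR_const_nat M : \big[Rplus/0]_(1 <= j < M.+1) 1 = INR M.
Proof.
by elim: M => [|M IH]; [rewrite big_geq | rewrite big_nat_recr // IH S_INR].
Qed.

Lemma sumR_telescope (u : nat -> R) m n : (m <= n)%N ->
  \big[Rplus/0]_(m <= i < n) (u i.+1 - u i) = u n - u m.
Proof.
elim: n => [|n IH]; first by rewrite leqn0 => /eqP->; rewrite big_geq //; lra.
rewrite leq_eqVlt => /orP[/eqP->|]; first by rewrite big_geq //; lra.
by rewrite ltnS => mn; rewrite big_nat_recr //= IH //; lra.
Qed.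

Lemma Nat_divE n k : Nat.div n k = n %/ k.
Proof.
case: k => [|k]; first by rewrite divn0.
symmetry; apply: (Nat.div_unique _ _ _ (n %% k.+1)).
  by apply/ltP; rewrite ltn_mod.
by rewrite {1}(divn_eq n k.+1) mulnC.
Qed.

Lemma INR_half_le u : 2 * INR (u %/ 2) <= INR u.
Proof.
have /leP/le_INR : (2 * (u %/ 2) <= u)%N by lia.
by rewrite mult_INR.
Qed.

Lemma ln_nat_ge0 n : (0 < n)%N -> 0 <= ln (INR n).
Proof.
by move=> n0; rewrite -ln_1; apply: ln_le; [lra | apply: (le_INR 1); apply/leP].
Qed.

Lemma ln_nat_le n m : (0 < n)%N -> (n <= m)%N -> ln (INR n) <= ln (INR m).
Proof. by move=> n0 nm; apply: ln_le; [apply: lt_0_INR | apply: le_INR]; apply/leP. Qed.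

Lemma ln_natM x y : (0 < x)%N -> (0 < y)%N -> ln (INR (x * y)) = ln (INR x) + ln (INR y).
Proof. by move=> x0 y0; rewrite mult_INR ln_mult //; apply: lt_0_INR; apply/ltP. Qed.

Definition indR (b : bool) : R := if b then 1 else 0.

Lemma sum_indR_mul (w : nat -> R) k m N : (0 < k)%N -> (m <= N)%N ->
  \big[Rplus/0]_(1 <= j < N.+1) (indR (j * k <= m)%N * w j) =
  \big[Rplus/0]_(1 <= j < (m %/ k).+1) w j.
Proof.
move=> k0 mN; have mkN : ((m %/ k).+1 <= N.+1)%N by rewrite ltnS (leq_trans (leq_div _ _)).
rewrite (big_nat_widen _ _ _ _ _ mkN) [RHS]big_mkcond /=.
by apply: eq_bigr => j _; rewrite ltnS leq_divRL // /indR; case: ifP => _; lra.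
Qed.

Lemma sum_indR k m N : (0 < k)%N -> (m <= N)%N ->
  \big[Rplus/0]_(1 <= j < N.+1) indR (j * k <= m)%N = INR (m %/ k).
Proof.
move=> k0 mN; rewrite -sumR_const_nat -(@sum_indR_mul (fun _ => 1) k m N) //.
by apply: eq_bigr => j _; lra.
Qed.

Definition dln (i : nat) : R := ln (INR i.+1) - ln (INR i).

Lemma dln_ge0 i : (0 < i)%N -> 0 <= dln i.
Proof. by move=> i0; have := @ln_nat_le i i.+1 i0 (leqnSn i); rewrite /dln; lra. Qed.

Lemma sum_dln n : (0 < n)%N -> \big[Rplus/0]_(1 <= i < n) dln i = ln (INR n).
Proof. by move=> n0; rewrite sumR_telescope // ln_1; lra. Qed.

Lemma sum_indR_dln x n : (0 < x)%N -> (x <= n)%N ->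
  \big[Rplus/0]_(1 <= i < n) (indR (x <= i)%N * dln i) = ln (INR n) - ln (INR x).
Proof.
move=> x0 xn; rewrite (big_cat_nat x0 xn) /=.
rewrite big_nat_cond big1 => [|i /andP[/andP[_ ix] _]]; last first.
  by rewrite /indR leqNgt ix Rmult_0_l.
rewrite Rplus_0_l -(sumR_telescope (fun i => ln (INR i))) //.
by apply: eq_big_nat => i /andP[xi _]; rewrite /indR xi Rmult_1_l.
Qed.

Lemma indR_ln_split j k n : (0 < j)%N -> (0 < k)%N ->
  indR (j * k <= n)%N * ln (INR k) =
  indR (j * k <= n)%N * ln (INR n)
  - \big[Rplus/0]_(1 <= i < n) (indR (j * k <= i)%N * dln i)
  - indR (j * k <= n)%N * ln (INR j).
Proof.
move=> j0 k0; case: (leqP (j * k) n) => [jkn|njk].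
  by rewrite sum_indR_dln ?muln_gt0 ?j0 // ln_natM // /indR; ring.
rewrite big_nat_cond big1 => [|i /andP[/andP[_ lt_in] _]]; first by rewrite /indR; ring.
by rewrite /indR ifF ?Rmult_0_l //; lia.
Qed.

Lemma ln_INR_prod {I : Type} (r : seq I) (P : pred I) (F : I -> nat) :
  (forall i, P i -> (0 < F i)%N) ->
  ln (INR (\prod_(i <- r | P i) F i)) = \big[Rplus/0]_(i <- r | P i) ln (INR (F i)).
Proof.
move=> F0; elim/(big_load (fun x => (0 < x)%N)): _.
elim/big_rec2: _ => [|i y1 y2 Pi [y0 <-]]; first by rewrite /= ln_1.
have Fi0 := F0 i Pi; split; first by rewrite muln_gt0 Fi0.
by rewrite ln_natM.
Qed.

Lemma INR_expn p e : INR (p ^ e)%N = INR p ^ e.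
Proof. by elim: e => [|e IH]; rewrite ?expn0 // expnS mult_INR IH. Qed.

Lemma ln_prime_ge0 p : prime p -> 0 <= ln (INR p).
Proof. by move/prime_gt0; apply: ln_nat_ge0. Qed.

Lemma ln_nat_logn n P : (0 < n)%N -> (n <= P)%N ->
  ln (INR n) = \big[Rplus/0]_(0 <= p < P.+1 | prime p) (ln (INR p) * INR (logn p n)).
Proof.
move=> n0 nP; rewrite -{1}(partnT n0) /partn ln_INR_prod; last first.
  by move=> p _; rewrite expn_gt0; case: (posnP p) => [->|//]; rewrite lognE.
rewrite [RHS]big_mkcond /= [RHS](big_cat_nat (n := n.+1)) //=.
rewrite [X in _ = _ + X]big_nat_cond [X in _ = _ + X]big1 ?Rplus_0_r; last first.
  move=> p /andP[/andP[lt_np _] _]; case: ifP => // _.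
  by rewrite ltn_log0 // Rmult_0_r.
apply: eq_bigr => p _; case: (boolP (prime p)) => pp.
  rewrite INR_expn ln_pow; first exact: Rmult_comm.
  by apply: lt_0_INR; apply/ltP; exact: prime_gt0.
by rewrite lognE (negbTE pp) expn0 ln_1.
Qed.

Lemma INR_sum {I : Type} (r : seq I) (P : pred I) (F : I -> nat) :
  INR (\sum_(i <- r | P i) F i) = \big[Rplus/0]_(i <- r | P i) INR (F i).
Proof. by elim/big_rec2: _ => [|i y1 y2 _ <-] //; rewrite plus_INR. Qed.

Lemma sumR_ln_fact M : \big[Rplus/0]_(1 <= j < M.+1) ln (INR j) = ln (INR M`!).
Proof.
elim: M => [|M IH]; first by rewrite big_geq // ln_1.
by rewrite factS ln_natM ?fact_gt0 // big_nat_recr //= IH; lra.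
Qed.

Lemma ln_fact_logn m P : (m <= P)%N ->
  ln (INR m`!) = \big[Rplus/0]_(0 <= p < P.+1 | prime p) (ln (INR p) * INR (logn p m`!)).
Proof.
elim: m => [|m IH] mP.
  by rewrite fact0 ln_1 big1 // => p _; rewrite logn1 Rmult_0_r.
rewrite factS ln_natM ?fact_gt0 // (@ln_nat_logn m.+1 P) // IH 1?ltnW // -big_split.
by apply: eq_bigr => p _; rewrite lognM ?fact_gt0 // plus_INR Rmult_plus_distr_l.
Qed.

(* [mangoldt_sum P f] is the sum of Lambda(d) f(d) over the prime powers
   d = p^t with p, t <= P; when f vanishes beyond n <= P it is the full sum
   over d <= n. *)
Definition mangoldt_sum (P : nat) (f : nat -> R) : R :=
  \big[Rplus/0]_(0 <= p < P.+1 | prime p)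
     \big[Rplus/0]_(1 <= t < P.+1) (ln (INR p) * f (p ^ t)%N).

Section MangoldtSum.
Variable P : nat.

Lemma eq_mangoldt_sum f g : (forall d, f d = g d) -> mangoldt_sum P f = mangoldt_sum P g.
Proof. by move=> fg; apply: eq_bigr => p _; apply: eq_bigr => t _; rewrite fg. Qed.

Lemma mangoldt_sumD f g :
  mangoldt_sum P (fun d => f d + g d) = mangoldt_sum P f + mangoldt_sum P g.
Proof.
rewrite -big_split; apply: eq_bigr => p _.
by rewrite -big_split; apply: eq_bigr => t _ /=; ring.
Qed.

Lemma mangoldt_sumB f g :
  mangoldt_sum P (fun d => f d - g d) = mangoldt_sum P f - mangoldt_sum P g.
Proof.
rewrite -sumR_sub; apply: eq_bigr => p _.
by rewrite -sumR_sub; apply: eq_bigr => t _; ring.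
Qed.

Lemma mangoldt_sumZ c f : mangoldt_sum P (fun d => c * f d) = c * mangoldt_sum P f.
Proof.
rewrite sumR_mull; apply: eq_bigr => p _.
by rewrite sumR_mull; apply: eq_bigr => t _; ring.
Qed.

Lemma ler_mangoldt_sum f g : (forall d, f d <= g d) ->
  mangoldt_sum P f <= mangoldt_sum P g.
Proof.
move=> fg; apply: ler_sumR => p pp; apply: ler_sumR => t _.
by apply: Rmult_le_compat_l; [exact: ln_prime_ge0 | exact: fg].
Qed.

Lemma mangoldt_sum_abs_le f :
  Rabs (mangoldt_sum P f) <= mangoldt_sum P (fun d => Rabs (f d)).
Proof.
apply: Rle_trans (sumR_abs_le _ _ _) _; apply: ler_sumR => p pp.
apply: Rle_trans (sumR_abs_le _ _ _) _; apply: ler_sumR => t _.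
by rewrite Rabs_mult (Rabs_pos_eq _ (ln_prime_ge0 _ pp)); lra.
Qed.

End MangoldtSum.

Lemma ln_fact_legendre m P : (m <= P)%N ->
  ln (INR m`!) = mangoldt_sum P (fun d => INR (m %/ d)).
Proof.
move=> mP; rewrite (@ln_fact_logn m P mP); apply: eq_bigr => p pp.
rewrite logn_fact // INR_sum sumR_mull [RHS](big_cat_nat (n := m.+1)) //=.
rewrite [X in _ = _ + X]big_nat_cond [X in _ = _ + X]big1 ?Rplus_0_r //.
move=> t /andP[/andP[lt_mt _] _]; rewrite divn_small ?Rmult_0_r //.
by apply: ltn_trans lt_mt (ltn_expl _ (prime_gt1 pp)).
Qed.

Lemma ln_le_sub1 y : 0 < y -> ln y <= y - 1.
Proof. by move=> y0; have := exp_ineq1_le (ln y); rewrite exp_ln //; lra. Qed.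

Lemma fact_double_le m : ((2 * m)`! <= 4 ^ m * m`! * m`!)%N.
Proof.
elim: m => [|m IH] //.
have -> : (2 * m.+1 = (2 * m).+2)%N by lia.
rewrite !factS expnS; move: (4 ^ m)%N (m`!) ((2 * m)`!) IH => X f F IH.
have le_sq : ((2 * m).+2 * (2 * m).+1 <= 4 * m.+1 * m.+1)%N by nia.
by have := leq_mul le_sq IH; nia.
Qed.

Lemma ln_fact_le_half n : ln (INR n`!) <= 2 * ln (INR (n %/ 2)`!) + 2 * INR n.
Proof.
set m := n %/ 2.
have le_fact : (n`! <= n.+1 * (4 ^ m * m`! * m`!))%N.
  have := fact_double_le m; move: (4 ^ m * m`! * m`!)%N => X.
  have [-> | ->] : n = (2 * m)%N \/ n = (2 * m).+1 by rewrite /m; lia.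
    by nia.
  by rewrite factS; nia.
have := @ln_nat_le _ _ (fact_gt0 n) le_fact.
rewrite !ln_natM ?muln_gt0 ?expn_gt0 ?fact_gt0 // INR_expn ln_pow; last first.
  by apply: lt_0_INR; lia.
rewrite -[4%N]/(2 * 2)%N ln_natM // (_ : INR 2 = 2) //.
have ln2_le1 : ln 2 <= 1 by have := ln_le_sub1 2 ltac:(lra); lra.
have lnS_le : ln (INR n.+1) <= INR n.
  by have := ln_le_sub1 (INR n.+1) (lt_0_INR _ (Nat.lt_0_succ n)); rewrite S_INR; lra.
by have := INR_half_le n; have := pos_INR m; rewrite -/m; nra.
Qed.

Lemma indR_pos_halving u : indR (0 < u)%N - indR (0 < u %/ 2)%N <= INR u - 2 * INR (u %/ 2).
Proof.
have := INR_half_le u; rewrite /indR; case: (posnP u) => [->|u0] /=; first lra.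
case: (posnP (u %/ 2)) => [->|_] /=; last lra.
by have := le_INR _ _ (leP u0); rewrite /=; lra.
Qed.

Definition chebyshev_psi (P n : nat) : R := mangoldt_sum P (fun d => indR (0 < n %/ d)%N).

Lemma chebyshev_psi_halving P n : (n <= P)%N ->
  chebyshev_psi P n <= chebyshev_psi P (n %/ 2) + 2 * INR n.
Proof.
move=> nP; have n2P : (n %/ 2 <= P)%N by rewrite (leq_trans (leq_div _ _)).
apply: (Rle_trans _
  (chebyshev_psi P (n %/ 2) + (ln (INR n`!) - 2 * ln (INR (n %/ 2)`!)))); last first.
  by have := ln_fact_le_half n; lra.
rewrite (@ln_fact_legendre n P nP) (@ln_fact_legendre _ P n2P) -mangoldt_sumZ -mangoldt_sumB.
rewrite -mangoldt_sumD; apply: ler_mangoldt_sum => d; rewrite divnAC.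
by have := indR_pos_halving (n %/ d); lra.
Qed.

Lemma chebyshev_psi_le P n : (n <= P)%N -> chebyshev_psi P n <= 4 * INR n.
Proof.
elim/ltn_ind: n => n IH nP; case: (posnP n) => [->|n0].
  rewrite /chebyshev_psi /mangoldt_sum big1 /=; first lra.
  by move=> p _; rewrite big1 // => t _; rewrite div0n /indR Rmult_0_r.
have := IH (n %/ 2) ltac:(lia) ltac:(lia).
by have := @chebyshev_psi_halving P n nP; have := INR_half_le n; lra.
Qed.

Definition AsumR (a : nat -> R) (m : nat) : R :=
  \big[Rplus/0]_(1 <= k < m.+1) (a k * INR (m %/ k)).

Definition SsumR (a : nat -> R) (n : nat) : R :=
  \big[Rplus/0]_(1 <= k < n.+1) (a k * (INR (n %/ k) * ln (INR k))).

Lemma AsumR_widen a m N : (m <= N)%N ->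
  \big[Rplus/0]_(1 <= k < N.+1) (a k * INR (m %/ k)) = AsumR a m.
Proof.
move=> mN; rewrite (big_cat_nat (n := m.+1)) //= [X in _ + X]big_nat_cond.
rewrite [X in _ + X]big1 ?Rplus_0_r // => k /andP[/andP[lt_mk _] _].
by rewrite divn_small // Rmult_0_r.
Qed.

Section HyperbolaIdentity.
Variables (a : nat -> R) (n : nat).

Lemma hyperbola_ln_n :
  \big[Rplus/0]_(1 <= k < n.+1) \big[Rplus/0]_(1 <= j < n.+1)
     (a k * (indR (j * k <= n)%N * ln (INR n))) = ln (INR n) * AsumR a n.
Proof.
rewrite /AsumR sumR_mull; apply: eq_big_nat => k /andP[k0 _].
by rewrite -(@sum_indR k n n) // !sumR_mull; apply: eq_bigr => j _; ring.
Qed.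

Lemma hyperbola_dln :
  \big[Rplus/0]_(1 <= k < n.+1) \big[Rplus/0]_(1 <= j < n.+1)
    \big[Rplus/0]_(1 <= i < n) (dln i * (a k * indR (j * k <= i)%N)) =
  \big[Rplus/0]_(1 <= i < n) (dln i * AsumR a i).
Proof.
under eq_bigr do rewrite (exchange_big_nat _ 1 n.+1 1 n).
rewrite (exchange_big_nat _ 1 n.+1 1 n); apply: eq_big_nat => i /andP[_ lt_in].
rewrite -(@AsumR_widen a i n (ltnW lt_in)) sumR_mull.
apply: eq_big_nat => k /andP[k0 _].
by rewrite -(@sum_indR k i n) ?(ltnW lt_in) // !sumR_mull; apply: eq_bigr => j _; ring.
Qed.

Lemma hyperbola_ln_j :
  \big[Rplus/0]_(1 <= k < n.+1) \big[Rplus/0]_(1 <= j < n.+1)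
     (a k * (indR (j * k <= n)%N * ln (INR j))) =
  mangoldt_sum n (fun d => AsumR a (n %/ d)).
Proof.
transitivity (\big[Rplus/0]_(1 <= k < n.+1)
                mangoldt_sum n (fun d => a k * INR (n %/ d %/ k))).
  apply: eq_big_nat => k /andP[k0 _].
  rewrite -sumR_mull (@sum_indR_mul (fun j => ln (INR j)) k n n) // sumR_ln_fact.
  rewrite (@ln_fact_legendre (n %/ k) n (leq_div _ _)) -mangoldt_sumZ.
  by apply: eq_mangoldt_sum => d; rewrite divnAC.
rewrite /mangoldt_sum exchange_big_nat; apply: eq_bigr => p _.
rewrite exchange_big_nat; apply: eq_bigr => t _.
by rewrite -(@AsumR_widen a _ n (leq_div _ _)) sumR_mull.
Qed.

Lemma SsumR_identity :
  SsumR a n = ln (INR n) * AsumR a n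
              - \big[Rplus/0]_(1 <= i < n) (dln i * AsumR a i)
              - mangoldt_sum n (fun d => AsumR a (n %/ d)).
Proof.
rewrite -hyperbola_ln_n -hyperbola_dln -hyperbola_ln_j -!sumR_sub.
apply: eq_big_nat => k /andP[k0 _].
rewrite -!sumR_sub -(@sum_indR k n n) // (Rmult_comm _ (ln _)) !sumR_mull.
apply: eq_big_nat => j /andP[j0 _].
have -> : \big[Rplus/0]_(1 <= i < n) (dln i * (a k * indR (j * k <= i)%N)) =
          a k * \big[Rplus/0]_(1 <= i < n) (indR (j * k <= i)%N * dln i).
  by rewrite sumR_mull; apply: eq_bigr => i _; ring.
by rewrite (Rmult_comm (ln _)) indR_ln_split //; ring.
Qed.

End HyperbolaIdentity.

Lemma AsumR_shift1 a c m :
  AsumR (fun k => a k - (if k == 1%N then c else 0)) m = AsumR a m - c * INR m.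
Proof.
rewrite /AsumR (eq_bigr (fun k => a k * INR (m %/ k)
                                  - (if k == 1%N then c else 0) * INR (m %/ k))).
  rewrite sumR_sub; congr (_ - _).
  case: m => [|m]; first by rewrite big_geq //=; ring.
  rewrite big_ltn // divn1 /= big_nat_cond big1 ?Rplus_0_r // => k /andP[/andP[k1 _] _].
  by rewrite ifF ?Rmult_0_l //; lia.
by move=> k _; ring.
Qed.

Lemma SsumR_shift1 a c n :
  SsumR (fun k => a k - (if k == 1%N then c else 0)) n = SsumR a n.
Proof. by apply: eq_bigr => k _; case: eqP => [->|_] /=; rewrite ?ln_1; ring. Qed.

Lemma ln_fact_le n : ln (INR n`!) <= INR n * ln (INR n).
Proof.
rewrite -sumR_ln_fact -{1}(sumR_const_nat n) Rmult_comm sumR_mull.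
rewrite big_nat_cond [X in _ <= X]big_nat_cond.
by apply: ler_sumR => j /andP[/andP[j0 jn] _]; rewrite Rmult_1_r; apply: ln_nat_le.
Qed.

Lemma eventually_le_affine (f g : nat -> R) N :
  (forall m, 0 <= g m) -> (forall m, (N <= m)%N -> Rabs (f m) <= g m) ->
  exists2 K, 0 <= K & forall m, Rabs (f m) <= g m + K.
Proof.
move=> g0 fg; have K0 : 0 <= \big[Rplus/0]_(0 <= m < N) Rabs (f m).
  by apply: sumR_ge0 => m _; apply: Rabs_pos.
exists (\big[Rplus/0]_(0 <= m < N) Rabs (f m)) => // m.
have := g0 m; case: (leqP N m) => [/fg | lt_mN]; first lra.
by have := @sumR_ge_term (fun m => Rabs (f m)) m 0 N (fun k => Rabs_pos _) lt_mN; lra.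
Qed.

Lemma Rabs_sub3_le x y z : Rabs (x - y - z) <= Rabs x + Rabs y + Rabs z.
Proof.
have := Rabs_triang (x - y) (- z); have := Rabs_triang x (- y).
by rewrite !Rabs_Ropp /Rminus; lra.
Qed.

Lemma SsumR_le_affine a e K n : 0 <= e -> 0 <= K -> (0 < n)%N ->
  (forall m, Rabs (AsumR a m) <= e * INR m + K) ->
  Rabs (SsumR a n) <=
  3 * e * (INR n * ln (INR n)) + K * (2 * ln (INR n) + 4 * INR n).
Proof.
move=> e0 K0 n0 HA; rewrite SsumR_identity.
have lnn : 0 <= ln (INR n) by apply: ln_nat_ge0.
have An_le : Rabs (ln (INR n) * AsumR a n) <= ln (INR n) * (e * INR n + K).
  by rewrite Rabs_mult Rabs_pos_eq //; apply: Rmult_le_compat_l.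
have Ai_le : Rabs (\big[Rplus/0]_(1 <= i < n) (dln i * AsumR a i)) <=
             ln (INR n) * (e * INR n + K).
  apply: Rle_trans (sumR_abs_le _ _ _) _.
  rewrite -(sum_dln _ n0) Rmult_comm sumR_mull big_nat_cond [X in _ <= X]big_nat_cond.
  apply: ler_sumR => i /andP[/andP[i0 lt_in] _]; have dln0 := dln_ge0 _ i0.
  rewrite Rabs_mult (Rabs_pos_eq _ dln0) Rmult_comm; apply: Rmult_le_compat_r => //.
  have /le_INR : (i <= n)%coq_nat by apply/leP; exact: ltnW.
  by have := HA i; nra.
have Ad_le : Rabs (mangoldt_sum n (fun d => AsumR a (n %/ d))) <=
             e * (INR n * ln (INR n)) + K * (4 * INR n).
  apply: Rle_trans (mangoldt_sum_abs_le _ _) _.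
  (* A(0) = 0, so K is paid only for d <= n, i.e. psi(n) times. *)
  apply: (Rle_trans _ _ _ (ler_mangoldt_sum _ _
            (fun d => e * INR (n %/ d) + K * indR (0 < n %/ d)%N) _)).
    move=> d; rewrite /indR; case: (posnP (n %/ d)) => [->|_].
      by rewrite /AsumR big_geq // Rabs_R0 /=; lra.
    by have := HA (n %/ d); lra.
  rewrite mangoldt_sumD !mangoldt_sumZ -(@ln_fact_legendre n n (leqnn n)).
  apply: Rplus_le_compat; apply: Rmult_le_compat_l => //.
    exact: ln_fact_le.
  exact: chebyshev_psi_le.
by have := Rabs_sub3_le (ln (INR n) * AsumR a n)
  (\big[Rplus/0]_(1 <= i < n) (dln i * AsumR a i))
  (mangoldt_sum n (fun d => AsumR a (n %/ d))); lra.
Qed.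

Lemma SsumR_little_o a c :
  (forall e, 0 < e -> exists N : nat, forall n, (N <= n)%N ->
     Rabs (AsumR a n - c * INR n) <= e * INR n) ->
  forall eps, 0 < eps -> exists N : nat, forall n, (N <= n)%N ->
     Rabs (SsumR a n) <= eps * (INR n * ln (INR n)).
Proof.
move=> HA eps eps0; have [N0 HN0] := HA (eps / 6) ltac:(lra).
have [K K0 HK] : exists2 K, 0 <= K & forall m,
    Rabs (AsumR (fun k => a k - (if k == 1%N then c else 0)) m) <= eps / 6 * INR m + K.
  apply: (@eventually_le_affine _ _ N0) => m; first by have := pos_INR m; nra.
  by rewrite AsumR_shift1; apply: HN0.
have [N1 HN1] := INR_unbounded (exp (12 * K / eps)).
exists (maxn 1 N1) => n; rewrite geq_max => /andP[n0 N1n].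
have lnn_ge : 12 * K <= eps * ln (INR n).
  rewrite (_ : 12 * K = eps * (12 * K / eps)); last by field; lra.
  apply: Rmult_le_compat_l; first lra.
  rewrite -[X in X <= _]ln_exp; apply: ln_le; first exact: exp_pos.
  by have := le_INR _ _ (leP N1n); lra.
have lnn_le : ln (INR n) <= INR n.
  by have := ln_le_sub1 (INR n) (lt_0_INR _ (leP n0)); lra.
have := @SsumR_le_affine _ (eps / 6) K n ltac:(lra) K0 n0 HK; rewrite SsumR_shift1.
have := Rmult_le_compat_l _ _ _ (pos_INR n) lnn_ge.
have := Rmult_le_compat_l _ _ _ K0 lnn_le.
lra.
Qed.

Lemma sum_n_m_C (f : nat -> C) n :
  sum_n_m f 1 n = (\big[Rplus/0]_(1 <= k < n.+1) Re (f k),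
                   \big[Rplus/0]_(1 <= k < n.+1) Im (f k)).
Proof.
elim: n => [|n IH]; first by rewrite sum_n_m_zero ?big_geq //; apply/ltP.
by rewrite sum_n_Sm; [rewrite IH !(@big_nat_recr _ _ _ n.+1 1) | apply/leP].
Qed.

Lemma Asum_parts a n :
  Asum a n = (AsumR (fun k => Re (a k)) n, AsumR (fun k => Im (a k)) n).
Proof.
by rewrite /Asum sum_n_m_C; congr pair; apply: eq_bigr => k _;
  rewrite Nat_divE /Re /Im /=; ring.
Qed.

Lemma Asum_sub_parts a c n :
  Cminus (Asum a n) (Cmult c (RtoC (INR n))) =
  (AsumR (fun k => Re (a k)) n - Re c * INR n, AsumR (fun k => Im (a k)) n - Im c * INR n).
Proof. by rewrite Asum_parts /Cminus /Cplus /Copp /Cmult /Re /Im /=; congr pair; ring. Qed.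

Lemma Ssum_parts a n :
  Ssum a n = (SsumR (fun k => Re (a k)) n, SsumR (fun k => Im (a k)) n).
Proof.
by rewrite /Ssum sum_n_m_C; congr pair; apply: eq_bigr => k _;
  rewrite Nat_divE /Re /Im /=; ring.
Qed.

Lemma Cmod_le_parts (z : C) : Cmod z <= Rabs (Re z) + Rabs (Im z).
Proof.
have Re0 := Rabs_pos (Re z); have Im0 := Rabs_pos (Im z).
rewrite /Cmod -(sqrt_Rsqr (Rabs (Re z) + Rabs (Im z))); last lra.
apply: sqrt_le_1_alt; rewrite /Rsqr -(pow2_abs (Re z)) -(pow2_abs (Im z)) /Re /Im /=.
by rewrite /Re /Im in Re0 Im0; nra.
Qed.

Theorem lemma4 (a : nat -> C) (c : C) :
  (forall eps : R, 0 < eps -> exists N : nat, forall n : nat, (N <= n)%coq_nat ->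
     Cmod (Cminus (Asum a n) (Cmult c (RtoC (INR n)))) <= eps * INR n) ->
  forall eps : R, 0 < eps -> exists N : nat, forall n : nat, (N <= n)%coq_nat ->
     Cmod (Ssum a n) <= eps * (INR n * ln (INR n)).
Proof.
move=> HA eps eps0.
have parts_le n : Rmax (Rabs (AsumR (fun k => Re (a k)) n - Re c * INR n))
                       (Rabs (AsumR (fun k => Im (a k)) n - Im c * INR n)) <=
                  Cmod (Cminus (Asum a n) (Cmult c (RtoC (INR n)))).
  by rewrite Asum_sub_parts; exact: (Rmax_Cmod (_, _)).
have [NRe HRe] : exists N : nat, forall n, (N <= n)%N ->
    Rabs (SsumR (fun k => Re (a k)) n) <= eps / 2 * (INR n * ln (INR n)).
  apply: (@SsumR_little_o _ (Re c)); last lra.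
  move=> e e0; have [N HN] := HA e e0; exists N => n /leP Nn.
  exact: Rle_trans (Rmax_l _ _) (Rle_trans _ _ _ (parts_le n) (HN n Nn)).
have [NIm HIm] : exists N : nat, forall n, (N <= n)%N ->
    Rabs (SsumR (fun k => Im (a k)) n) <= eps / 2 * (INR n * ln (INR n)).
  apply: (@SsumR_little_o _ (Im c)); last lra.
  move=> e e0; have [N HN] := HA e e0; exists N => n /leP Nn.
  exact: Rle_trans (Rmax_r _ _) (Rle_trans _ _ _ (parts_le n) (HN n Nn)).
exists (maxn NRe NIm) => n /leP; rewrite geq_max => /andP[NRe_n NIm_n].
apply: Rle_trans (Cmod_le_parts _) _; rewrite Ssum_parts /=.
by have := HRe n NRe_n; have := HIm n NIm_n; lra.
Qed.
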